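(* Let $K$ be a field of characteristic zero, $(\mathfrak{g},s)$ a finite-dimensional solvable Lie algebra with filtration over $K$, $f\in\mathfrak{g}^*$, and let $l\in M(f)$ be a nonzero element with $(x-f(x))l=0$ for all $x\in\mathfrak{pv}(f)$. If $y\in\mathfrak{g}$ and $\lambda\in K$ satisfy $(y-\lambda)l=0$, then $y\in\mathfrak{pv}(f)$ and $\lambda=f(y)$.
   Context: A filtration $s$ on $\mathfrak{g}$ is a chain $\mathfrak{g}=\mathfrak{g}_0\supseteq\mathfrak{g}_1\supseteq\dots\supseteq\mathfrak{g}_k=\{0\}$ of ideals of $\mathfrak{g}$ with $\dim\mathfrak{g}_{i-1}/\mathfrak{g}_i\le1$. For $f\in\mathfrak{g}^*$ let $f_i=f|_{\mathfrak{g}_i}$, $\mathfrak{g}_i^{f_i}=\{x\in\mathfrak{g}_i\mid f([x,\mathfrak{g}_i])=0\}$, and let $\mathfrak{pv}(f)=\sum_{i=0}^k\mathfrak{g}_i^{f_i}$ be the Vergne polarization (a subalgebra, maximal isotropic for $(x,y)\mapsto f([x,y])$). $M(f)=U(\mathfrak{g})\otimes_{U(\mathfrak{pv}(f))}K_f$, where $K_f$ is the one-dimensional $U(\mathfrak{pv}(f))$-module on which $x$ acts by $f(x)$. *)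

From HB Require Import structures.
From mathcomp Require Import all_boot all_order all_algebra.
Set Implicit Arguments. Unset Strict Implicit. Unset Printing Implicit Defensive.
Import Order.TTheory GRing.Theory Num.Theory.
Local Open Scope ring_scope.

Section LieDefs.
Variables (K : fieldType) (V : vectType K).

Record lie_algebra (br : V -> V -> V) : Prop := LieAlgebra {
  lie_linl : forall (a : K) x y z, br (a *: x + y) z = a *: br x z + br y z;
  lie_linr : forall (a : K) x y z, br z (a *: x + y) = a *: br z x + br z y;
  lie_alt : forall x, br x x = 0;
  lie_jacobi : forall x y z, br x (br y z) + br y (br z x) + br z (br x y) = 0
}.

(* Derived series: D^0 = g, D^(n+1) = [D^n, D^n] (span of brackets; by
   bilinearity it suffices to bracket basis vectors). *)
Fixpoint derived (br : V -> V -> V) (n : nat) : {vspace V} :=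
  match n with
  | 0 => fullv
  | n'.+1 => let B := vbasis (derived br n') in
             <<[seq br u v | u <- B, v <- B]>>%VS
  end.

Definition solvable_lie (br : V -> V -> V) : Prop :=
  exists n, derived br n = 0%VS.

Definition lie_ideal (br : V -> V -> V) (I : {vspace V}) : Prop :=
  forall x y, y \in I -> br x y \in I.

(* A filtration s : g = g_0 ⊇ g_1 ⊇ ... ⊇ g_k = 0 of ideals with
   dim g_(i-1)/g_i <= 1 (indices > k are irrelevant). *)
Definition filtration (br : V -> V -> V) (k : nat) (gs : nat -> {vspace V}) : Prop :=
  [/\ gs 0 = fullv, gs k = 0%VS,
      forall i, (i <= k)%N -> lie_ideal br (gs i),
      forall i, (i < k)%N -> (gs i.+1 <= gs i)%VS
    & forall i, (i < k)%N -> (\dim (gs i) <= (\dim (gs i.+1)).+1)%N].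

Definition linear_functional (f : V -> K) : Prop :=
  forall (a : K) x y, f (a *: x + y) = a * f x + f y.

Definition stab_mem (br : V -> V -> V) (f : V -> K) (gi : {vspace V}) (x : V) : Prop :=
  x \in gi /\ forall y, y \in gi -> f (br x y) = 0.

Definition pv (br : V -> V -> V) (k : nat) (gs : nat -> {vspace V}) (f : V -> K)
  (x : V) : Prop :=
  exists xs : 'I_k.+1 -> V,
    (forall i : 'I_k.+1, stab_mem br f (gs i) (xs i)) /\ x = \sum_(i < k.+1) xs i.

Record lie_module (br : V -> V -> V) (M : lmodType K) (act : V -> M -> M) : Prop :=
  LieModule {
  lmod_linl : forall (a : K) x y m, act (a *: x + y) m = a *: act x m + act y m;
  lmod_linr : forall (a : K) x m n, act x (a *: m + n) = a *: act x m + act x n;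
  lmod_bracket : forall x y m, act (br x y) m = act x (act y m) - act y (act x m)
}.

(* (M, act, v0) is the induced module U(g) ⊗_{U(p)} K_f (p given by the
   predicate P), characterised by its universal property: v0 satisfies
   x.v0 = f(x) v0 for x in p, and for every g-module N and w in N with the
   same property there is a unique g-module morphism M -> N sending v0 to w. *)
Definition induced_module (br : V -> V -> V) (P : V -> Prop) (f : V -> K)
  (M : lmodType K) (act : V -> M -> M) (v0 : M) : Prop :=
  (forall x, P x -> act x v0 = f x *: v0) /\
  forall (N : lmodType K) (actN : V -> N -> N), lie_module br actN ->
  forall w : N, (forall x, P x -> actN x w = f x *: w) ->
  exists phi : M -> N,
    [/\ (forall (a : K) m n, phi (a *: m + n) = a *: phi m + phi n),
        (forall x m, phi (act x m) = actN x (phi m)),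
        phi v0 = w &
        forall psi : M -> N,
          (forall (a : K) m n, psi (a *: m + n) = a *: psi m + psi n) ->
          (forall x m, psi (act x m) = actN x (psi m)) ->
          psi v0 = w -> forall m, psi m = phi m].

End LieDefs.

From HB Require Import structures.
From mathcomp Require Import all_boot all_order all_algebra.
From Stdlib Require Import Classical.
Set Implicit Arguments. Unset Strict Implicit. Unset Printing Implicit Defensive.
Import GRing.Theory.
Local Open Scope ring_scope.

(* Descending induction along the filtration: an element x of g_j acting on l
   by a scalar c lies in the sum of the g_i^{f_i}, i >= j, and c = f(x).
   Passing from g_(j+1) to the codimension-one g_j, either some a in
   g_j^{f_j} lies outside g_(j+1), so that g_j = g_(j+1) + K a and one
   subtracts a multiple of a; or the radical of f([.,.]) on g_j lies in
   g_(j+1), and then for x in g_j \ g_(j+1) linear algebra yields a in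
   g_(j+1)^{f_(j+1)} with f([a,x]) <> 0, whereas [a,x] lies in g_(j+1) and
   kills the common eigenvector l. *)

Lemma addv_line_codim1 (K : fieldType) (V : vectType K) (H W : {vspace V}) z :
  (H <= W)%VS -> (\dim W <= (\dim H).+1)%N -> z \in W -> z \notin H ->
  (H + <[z]>)%VS = W.
Proof.
move=> HW dimW zW zH.
have HHz : (H != H + <[z]>)%VS.
  by apply: contraNneq zH => ->; rewrite -{1}[z]add0r memv_add ?mem0v ?memv_line.
have ltH : (\dim H < \dim (H + <[z]>))%N.
  by rewrite (ltn_leqif (dimv_leqif_eq (addvSl _ _))).
apply/eqP; rewrite eqEdim subv_add HW -memvE zW.
exact: leq_trans dimW ltH.
Qed.

Lemma alternating_antisym (R : nzRingType) (U : lmodType R) (W : zmodType)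
    (s s' : R -> W -> W) (B : {bilinear U -> U -> W | s & s'}) :
  (forall u, B u u = 0) -> forall u v, B u v = - B v u.
Proof.
move=> Balt u v; apply/eqP; rewrite -addr_eq0.
by have := Balt (u + v); rewrite linearDl !linearDr !Balt add0r addr0 => ->.
Qed.

Lemma linear_vbasis_eq (K : fieldType) (V : vectType K) (W : zmodType)
    (s : GRing.Scale.law K W) (phi psi : {linear V -> W | s}) (H : {vspace V}) :
  (forall i : 'I_(\dim H), phi (vbasis H)`_i = psi (vbasis H)`_i) ->
  {in H, phi =1 psi}.
Proof.
move=> Ebasis h /coord_vbasis ->; rewrite !linear_sum; apply: eq_bigr => i _.
by rewrite !linearZ_LR Ebasis.
Qed.

Section Forms.
Variables (K : fieldType) (V : vectType K) (B : {biscalar V}).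

Lemma form_repr (H : {vspace V}) (phi : {scalar V}) :
  (forall r, r \in H -> {in H, forall h, B h r = 0} -> phi r = 0) ->
  exists2 h0, h0 \in H & {in H, forall h, phi h = B h0 h}.
Proof.
move=> phi_rad; set b := vbasis H.
have bH (i : 'I_(\dim H)) : b`_i \in H.
  by apply: vbasis_mem; rewrite mem_nth ?size_tuple.
pose G : 'M[K]_(\dim H) := \matrix_(i, j) B b`_i b`_j.
pose v : 'rV[K]_(\dim H) := \row_j phi b`_j.
(* v kills the right kernel of the Gram matrix G, which encodes the radical
   of B on H, hence lies in the row space of G. *)
have vG : (v <= G)%MS.
  rewrite submxE; apply/eqP/matrixP => i j; rewrite !mxE.
  pose r := \sum_k cokermx G k j *: b`_k.
  have rH : r \in H by apply: memv_suml => k _; apply: memvZ.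
  have GC (i0 : 'I_(\dim H)) : \sum_k B b`_i0 (cokermx G k j *: b`_k) = 0.
    transitivity ((G *m cokermx G) i0 j); last by rewrite mulmx_coker mxE.
    by rewrite mxE; apply: eq_bigr => k _; rewrite linearZr_LR mulrC [G _ _]mxE.
  have Br : {in H, forall h, B h r = 0}.
    move=> h /coord_vbasis ->; rewrite linear_sumlz big1 // => i0 _.
    by rewrite linearZl_LR linear_sumr /= GC mulr0.
  rewrite -[RHS](phi_rad r rH Br) linear_sum; apply: eq_bigr => k _.
  by rewrite linearZ_LR mxE mulrC.
case/submxP: vG => d vdG.
exists (\sum_i d 0 i *: b`_i); first by apply: memv_suml => i _; apply: memvZ.
apply: linear_vbasis_eq => j.
have := congr1 (fun A : 'rV[K]_(\dim H) => A 0 j) vdG; rewrite !mxE => ->.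
by rewrite /= linear_sumlz; apply: eq_bigr => i _; rewrite linearZl_LR [G _ _]mxE.
Qed.

Hypothesis B_alt : forall u, B u u = 0.

Lemma radical_addv_line (H : {vspace V}) x : x \notin H ->
    (forall z, z \in (H + <[x]>)%VS ->
       {in (H + <[x]>)%VS, forall w, B z w = 0} -> z \in H) ->
  exists a, [/\ a \in H, {in H, forall h, B a h = 0} & B a x != 0].
Proof.
move=> xH radH; apply: NNPP => no_a.
have B_rad r : r \in H -> {in H, forall h, B h r = 0} -> B x r = 0.
  move=> rH Br; apply/eqP; apply: contra_notT no_a => Bxr.
  exists r; split => // [h hH|]; rewrite alternating_antisym //.
  - by rewrite Br ?oppr0.
  - by rewrite oppr_eq0.
have [h0 h0H Eh0] := @form_repr H (B x) B_rad.
have x'H : {in H, forall h, B (x - h0) h = 0}.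
  by move=> h hH; rewrite linearBl /= Eh0 ?subrr.
have x'x : B (x - h0) x = 0.
  by rewrite -{2}(subrK h0 x) linearDr B_alt x'H ?addr0.
have /(memvD h0H) : x - h0 \in H.
  apply: radH => [|w /memv_addP [h hH [u /vlineP [a ->] ->]]].
    exact: memvB (subvP (addvSr H _) _ (memv_line x)) (subvP (addvSl H _) _ h0H).
  by rewrite linearDr linearZr_LR /= x'H ?x'x ?mulr0 ?addr0.
by rewrite addrC subrK (negbTE xH).
Qed.
End Forms.

Section EigenvectorOfPolarization.
Variables (K : fieldType) (V : vectType K) (br : V -> V -> V) (f : V -> K).
Variables (M : lmodType K) (act : V -> M -> M).
Hypotheses (HL : lie_algebra br) (Hf : linear_functional f)
  (HM : lie_module br act).

HB.instance Definition _ := GRing.isLinear.Build K V K *%R f Hf.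

HB.instance Definition _ := bilinear_isBilinear.Build K V V V *:%R *:%R br
  (fun z a x y => lie_linl HL a x y z, fun z a x y => lie_linr HL a x y z).

HB.instance Definition _ := bilinear_isBilinear.Build K V M M *:%R *:%R act
  (fun m a x y => lmod_linl HM a x y m, fun x a m n => lmod_linr HM a x m n).

Definition lie_form u v := f (br u v).

Fact lie_form_is_bilinear : bilinear_for *%R *%R lie_form.
Proof. by split=> u a x y; rewrite /lie_form (linearPl, linearPr) linearP. Qed.

HB.instance Definition _ :=
  bilinear_isBilinear.Build K V V K *%R *%R lie_form lie_form_is_bilinear.

Lemma lie_bracket_antisym u v : br u v = - br v u.
Proof. exact/alternating_antisym/(lie_alt HL). Qed.

Lemma lie_form_alt u : lie_form u u = 0.
Proof. by rewrite /lie_form (lie_alt HL) linear0. Qed.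

Lemma stab_mem0 gi : stab_mem br f gi 0.
Proof. by split=> [|y _]; rewrite ?mem0v ?linear0l ?linear0. Qed.

Lemma stab_mem_lincomb gi a u v :
  stab_mem br f gi u -> stab_mem br f gi v -> stab_mem br f gi (a *: u + v).
Proof.
move=> [uG uS] [vG vS]; split=> [|w wG]; first by rewrite memvD ?memvZ.
by rewrite linearPl linearP /= uS ?vS ?mulr0 ?addr0.
Qed.

Variables (k : nat) (gs : nat -> {vspace V}).
Hypothesis Hs : filtration br k gs.

Definition pv_from (j : nat) (x : V) : Prop :=
  exists xs : 'I_k.+1 -> V,
    [/\ forall i : 'I_k.+1, stab_mem br f (gs i) (xs i),
        forall i : 'I_k.+1, (i < j)%N -> xs i = 0
      & x = \sum_(i < k.+1) xs i].

Lemma pv_from_lincomb j a u v :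
  pv_from j u -> pv_from j v -> pv_from j (a *: u + v).
Proof.
move=> [xs [xsS xs0 ->]] [ys [ysS ys0 ->]].
exists (fun i => a *: xs i + ys i); split.
- by move=> i; apply: stab_mem_lincomb.
- by move=> i ij; rewrite xs0 ?ys0 ?scaler0 ?addr0.
- by rewrite scaler_sumr -big_split.
Qed.

Lemma pv_fromW i j x : (i <= j)%N -> pv_from j x -> pv_from i x.
Proof.
move=> ij [xs [xsS xs0 ->]]; exists xs; split=> // i0 i0i.
exact/xs0/(leq_trans i0i).
Qed.

Lemma stab_mem_pv_from j a :
  (j <= k)%N -> stab_mem br f (gs j) a -> pv_from j a.
Proof.
move=> jk aS; pose j' : 'I_k.+1 := Ordinal (jk : (j < k.+1)%N).
exists (fun i => if i == j' then a else 0); split.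
- by move=> i; case: eqP => [->|_]; [exact: aS | exact: stab_mem0].
- by move=> i ij; case: eqP => // ij'; rewrite ij' ltnn in ij.
- by rewrite (bigD1 j') //= eqxx big1 ?addr0 // => i /negbTE ->.
Qed.

Lemma pv_from0 x : pv_from 0 x -> pv br k gs f x.
Proof. by move=> [xs [xsS _ ->]]; exists xs. Qed.

Variable l : M.
Hypotheses (l_neq0 : l != 0)
  (l_eigen : forall x, pv br k gs f x -> act x l = f x *: l).

Lemma eigenvalue_inj c d : c *: l = d *: l -> c = d.
Proof.
move/eqP; rewrite -subr_eq0 -scalerBl scaler_eq0 (negbTE l_neq0) orbF.
by rewrite subr_eq0 => /eqP.
Qed.

Lemma pv_from_eigen j a : pv_from j a -> act a l = f a *: l.
Proof. by move=> /(pv_fromW (leq0n j)) /pv_from0 /l_eigen. Qed.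

Lemma eigen_bracket x y c d :
  act x l = c *: l -> act y l = d *: l -> act (br x y) l = 0.
Proof.
move=> xl yl; rewrite (lmod_bracket HM) xl yl !linearZr_LR /= xl yl.
by rewrite !scalerA mulrC subrr.
Qed.

Definition eigen_pv_from (j : nat) : Prop :=
  forall x c, x \in gs j -> act x l = c *: l -> pv_from j x /\ c = f x.

Lemma eigen_step_new_stab j a : (j < k)%N ->
  stab_mem br f (gs j) a -> a \notin gs j.+1 ->
  eigen_pv_from j.+1 -> eigen_pv_from j.
Proof.
move=> jk aS aH IH x c xG xl; have [_ _ _ gsS gsd] := Hs.
move: xG xl; rewrite -(addv_line_codim1 (gsS j jk) (gsd j jk) aS.1 aH).
case/memv_addP=> h hH [_ /vlineP [al ->] ->] xl.
have aP : pv_from j a := stab_mem_pv_from (ltnW jk) aS.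
have hl : act h l = (c - al * f a) *: l.
  move: xl; rewrite linearDl linearZl_LR /= (pv_from_eigen aP) scalerA.
  by move=> /(canRL (addrK _)) ->; rewrite scalerBl.
have [hP Eh] := IH h _ hH hl.
split; last by rewrite linearD linearZ /= -Eh subrK.
by rewrite addrC; apply: pv_from_lincomb aP (pv_fromW (leqnSn j) hP).
Qed.

Lemma eigen_step_no_stab j x c : (j < k)%N ->
  (forall a, stab_mem br f (gs j) a -> a \in gs j.+1) ->
  eigen_pv_from j.+1 -> x \in gs j -> act x l = c *: l -> x \in gs j.+1.
Proof.
move=> jk stabS IH xG xl; apply: contraT => xH; have [_ _ gsI gsS gsd] := Hs.
have gsj := addv_line_codim1 (gsS j jk) (gsd j jk) xG xH.
have [|a [aH aS /negP[]]] := radical_addv_line lie_form_alt xH.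
  by rewrite gsj => z zG zS; apply: stabS.
have al : act a l = f a *: l.
  exact: pv_from_eigen (stab_mem_pv_from jk (conj aH aS)).
have axG : br a x \in gs j.+1 by rewrite lie_bracket_antisym memvN gsI.
have axl : act (br a x) l = 0 *: l by rewrite (eigen_bracket al xl) scale0r.
have [_ Eax] := IH _ _ axG axl.
by apply/eqP; rewrite /= /lie_form -Eax.
Qed.

Lemma eigen_step j : (j < k)%N -> eigen_pv_from j.+1 -> eigen_pv_from j.
Proof.
move=> jk IH.
have [[a [aS aH]]|no_stab] :=
  classic (exists a, stab_mem br f (gs j) a /\ a \notin gs j.+1).
  exact: eigen_step_new_stab aS aH IH.
move=> x c xG xl.
have xH : x \in gs j.+1.
  apply: eigen_step_no_stab jk _ IH xG xl => a aS.
  by apply: contraT => aH; exfalso; apply: no_stab; exists a.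
have [xP ->] := IH x c xH xl; split=> //; exact: pv_fromW (leqnSn j) xP.
Qed.

Lemma eigen_pv_from_le j : (j <= k)%N -> eigen_pv_from j.
Proof.
move=> /subnK; move: (k - j)%N => n; elim: n j => [|n IH] j.
  have [_ gsk _ _ _] := Hs.
  rewrite add0n => -> x c; rewrite gsk memv0 => /eqP-> l0; split.
    exact/stab_mem_pv_from/stab_mem0.
  by rewrite linear0; apply: eigenvalue_inj; rewrite -l0 linear0l scale0r.
move=> njk; apply: eigen_step; first by rewrite -njk addSn ltnS leq_addl.
by apply: IH; rewrite addnS -addSn.
Qed.

End EigenvectorOfPolarization.

Theorem lemma3p2 (K : fieldType) (HK : [pchar K] =i pred0)
  (V : vectType K) (br : V -> V -> V) (HL : lie_algebra br)
  (Hsol : solvable_lie br)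
  (k : nat) (gs : nat -> {vspace V}) (Hs : filtration br k gs)
  (f : V -> K) (Hf : linear_functional f)
  (M : lmodType K) (act : V -> M -> M) (HM : lie_module br act) (v0 : M)
  (Hind : induced_module br (pv br k gs f) f act v0)
  (l : M) (Hl0 : l != 0)
  (Hl : forall x, pv br k gs f x -> act x l = f x *: l)
  (y : V) (lam : K) (Hy : act y l = lam *: l) :
  pv br k gs f y /\ lam = f y.
Proof.
have [gs0 _ _ _ _] := Hs.
have yG : y \in gs 0 by rewrite gs0 memvf.
have [yP ->] := eigen_pv_from_le HL Hf HM Hs Hl0 Hl (leq0n k) yG Hy.
by split=> //; apply: pv_from0.
Qed.
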